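(* Fix $n\ge 1$ and vectors $\mathbf v_0,\dots,\mathbf v_{n+1}\in\mathbb R^d$. For every choice of arc-hybrid scoring functions $g_{\mathsf{sh}},g_{\mathsf{re}_\curvearrowright},g_{\mathsf{re}_\curvearrowleft}:\mathbb R^d\times\mathbb R^d\to\mathbb R$ there exist arc-eager scoring functions $f_{\mathsf{sh}},f_{\mathsf{re}_\curvearrowleft},f_{\mathsf{ra}},f_{\mathsf{re}}$ (which may be taken with $f_{\mathsf{sh}}=f_{\mathsf{ra}}$) such that every dependency tree on $w_0,\dots,w_n$ receives the same score under the arc-eager model as under the arc-hybrid model. (That is, the arc-eager model contains the arc-hybrid model.)
   Context: Sentence $w_1,\dots,w_n$ with $w_0=\mathrm{ROOT}$ and $w_{n+1}$ an end-of-sentence marker; each position $i$ has a fixed feature vector $\mathbf v_i\in\mathbb R^d$. A dependency tree is a set of arcs $(h,m)$ (head $h$, modifier $m$). Arc-hybrid deduction system (items $[i,j]$, $0\le i<j\le n+1$, with scores). Axiom $[0,1]:0$. Rules: - sh: from $[i,j]:v$ with $j\le n$ derive $[j,j+1]:0$. - $\mathsf{re}_\curvearrowright$: from $[k,i]:v_1$ and $[i,j]:v_2$ derive $[k,j]:v_1+v_2+g_{\mathsf{sh}}(\mathbf v_k,\mathbf v_i)+g_{\mathsf{re}_\curvearrowright}(\mathbf v_i,\mathbf v_j)$, adding arc $(k,i)$. - $\mathsf{re}_\curvearrowleft$: from $[k,i]:v_1$ and $[i,j]:v_2$ derive $[k,j]:v_1+v_2+g_{\mathsf{sh}}(\mathbf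 v_k,\mathbf v_i)+g_{\mathsf{re}_\curvearrowleft}(\mathbf v_i,\mathbf v_j)$, adding arc $(j,i)$. Goal $[0,n+1]$. Arc-eager deduction system (items $[i^b,j]$, $b\in\{0,1\}$, with scores). Axiom $[0^0,1]:0$. Rules: - sh: from $[i^b,j]:v$ with $j\le n$ derive $[j^0,j+1]:0$. - ra: from $[i^b,j]:v$ with $j\le n$ derive $[j^1,j+1]:0$. - $\mathsf{re}_\curvearrowleft$: from $[k^b,i]:v_1$ and $[i^0,j]:v_2$ derive $[k^b,j]:v_1+v_2+f_{\mathsf{sh}}(\mathbf v_k,\mathbf v_i)+f_{\mathsf{re}_\curvearrowleft}(\mathbf v_i,\mathbf v_j)$, adding arc $(j,i)$. - re: from $[k^b,i]:v_1$ and $[i^1,j]:v_2$ derive $[k^b,j]:v_1+v_2+f_{\mathsf{ra}}(\mathbf v_k,\mathbf v_i)+f_{\mathsf{re}}(\mathbf v_i,\mathbf v_j)$, adding arc $(k,i)$. Goal $[0^0,n+1]$. In each system, a derivation of the goal encodes the tree formed by all arcs added by its reduce applications, and its score is the goal item's score. The score of a tree under a model is the maximum score over goal derivations encoding it ($-\infty$ if there is none). *)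

From Stdlib Require Import Reals List Relations.
From Stdlib Require Fin.
Import ListNotations.
Open Scope R_scope.

Definition vec (d : nat) : Type := Fin.t d -> R.

(* An arc (h, m): head h, modifier m. *)
Definition arc : Type := (nat * nat)%type.

(* ---------- Arc-hybrid deduction system ----------
   hderiv i j v A : item [i,j] is derived with score v, and A is the list
   of arcs added by the reduce applications whose scores are accumulated
   in v.  The premise of sh only needs to be derivable (its score and
   arcs are discarded, the conclusion has score 0). *)
Inductive hderiv (d n : nat) (x : nat -> vec d)
    (gsh grer grel : vec d -> vec d -> R) : nat -> nat -> R -> list arc -> Prop :=
| h_ax : hderiv d n x gsh grer grel 0 1 0 []
| h_sh : forall i j v A,
    hderiv d n x gsh grer grel i j v A -> (j <= n)%nat ->
    hderiv d n x gsh grer grel j (S j) 0 []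
| h_rer : forall k i j v1 A1 v2 A2,
    hderiv d n x gsh grer grel k i v1 A1 ->
    hderiv d n x gsh grer grel i j v2 A2 ->
    hderiv d n x gsh grer grel k j
      (v1 + v2 + gsh (x k) (x i) + grer (x i) (x j)) ((k, i) :: A1 ++ A2)
| h_rel : forall k i j v1 A1 v2 A2,
    hderiv d n x gsh grer grel k i v1 A1 ->
    hderiv d n x gsh grer grel i j v2 A2 ->
    hderiv d n x gsh grer grel k j
      (v1 + v2 + gsh (x k) (x i) + grel (x i) (x j)) ((j, i) :: A1 ++ A2).

(* ---------- Arc-eager deduction system ----------
   ederiv i b j v A : item [i^b, j] derived with score v and arcs A. *)
Inductive ederiv (d n : nat) (x : nat -> vec d)
    (fsh frel fra fre : vec d -> vec d -> R) : nat -> bool -> nat -> R -> list arc -> Prop :=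
| e_ax : ederiv d n x fsh frel fra fre 0 false 1 0 []
| e_sh : forall i b j v A,
    ederiv d n x fsh frel fra fre i b j v A -> (j <= n)%nat ->
    ederiv d n x fsh frel fra fre j false (S j) 0 []
| e_ra : forall i b j v A,
    ederiv d n x fsh frel fra fre i b j v A -> (j <= n)%nat ->
    ederiv d n x fsh frel fra fre j true (S j) 0 []
| e_rel : forall k b i j v1 A1 v2 A2,
    ederiv d n x fsh frel fra fre k b i v1 A1 ->
    ederiv d n x fsh frel fra fre i false j v2 A2 ->
    ederiv d n x fsh frel fra fre k b j
      (v1 + v2 + fsh (x k) (x i) + frel (x i) (x j)) ((j, i) :: A1 ++ A2)
| e_re : forall k b i j v1 A1 v2 A2,
    ederiv d n x fsh frel fra fre k b i v1 A1 ->
    ederiv d n x fsh frel fra fre i true j v2 A2 ->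
    ederiv d n x fsh frel fra fre k b j
      (v1 + v2 + fra (x k) (x i) + fre (x i) (x j)) ((k, i) :: A1 ++ A2).

Definition encodes (A : list arc) (T : nat -> nat -> Prop) : Prop :=
  forall h m, In (h, m) A <-> T h m.

Definition dep_tree (n : nat) (T : nat -> nat -> Prop) : Prop :=
  (forall h m, T h m -> (h <= n)%nat /\ (1 <= m <= n)%nat) /\
  (forall m, (1 <= m <= n)%nat -> exists h, T h m /\ forall h', T h' m -> h' = h) /\
  (forall m, (1 <= m <= n)%nat -> clos_trans nat (fun a b => T b a) m 0%nat).

(* score_is D T s : under the goal derivations D (score, arcs), the score of
   tree T is s, where None stands for -infinity (no derivation encodes T)
   and Some x means x is the maximum score over derivations encoding T. *)
Definition score_is (D : R -> list arc -> Prop) (T : nat -> nat -> Prop)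
    (s : option R) : Prop :=
  match s with
  | None => forall v A, D v A -> ~ encodes A T
  | Some y => (exists A, D y A /\ encodes A T) /\
              (forall v A, D v A -> encodes A T -> v <= y)
  end.

Definition hybrid_score d n x gsh grer grel T s : Prop :=
  score_is (hderiv d n x gsh grer grel 0 (S n)) T s.

Definition eager_score d n x fsh frel fra fre T s : Prop :=
  score_is (ederiv d n x fsh frel fra fre 0 false (S n)) T s.

From Stdlib Require Import Reals List Relations Lia.
Open Scope R_scope.

(* Take f_sh = f_ra = g_sh, f_re<- = g_re<- and f_re = g_re->.  Erasing the bit b
   turns every arc-eager derivation into an arc-hybrid one with the same score
   and arcs.  Conversely an arc-hybrid derivation of [i,j] can be decorated with
   any bit as long as i > 0: the bit only records which reduce rule will consume
   the item.  Only items [0,j] are forced to carry bit 0, and they are never the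
   right premise of a reduce.  So both systems have the same goal derivations,
   and every tree gets the same score. *)

Lemma score_is_ext (D1 D2 : R -> list arc -> Prop) T s :
  (forall v A, D1 v A <-> D2 v A) -> (score_is D1 T s <-> score_is D2 T s).
Proof.
  intros HD; destruct s as [y|]; simpl.
  - split; intros [[A [HA HT]] Hmax]; split;
      try (exists A; split; [apply HD|]; assumption);
      intros v A' HA'; apply Hmax, HD; assumption.
  - split; intros Hnone v A HA; apply (Hnone v A), HD; assumption.
Qed.

Section HybridAsEager.

Variables (d n : nat) (x : nat -> vec d) (gsh grer grel : vec d -> vec d -> R).

Let hyb := hderiv d n x gsh grer grel.
Let eag := ederiv d n x gsh grel gsh grer.

Lemma hderiv_lt i j v A : hyb i j v A -> (i < j)%nat.
Proof. induction 1; lia. Qed.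

Lemma hderiv_ederiv i j v A :
  hyb i j v A -> forall b, (i = 0%nat -> b = false) -> eag i b j v A.
Proof.
  induction 1 as [| i j v A Hij IH Hj | k i j v1 A1 v2 A2 Hki IH1 Hij IH2
                  | k i j v1 A1 v2 A2 Hki IH1 Hij IH2]; intros b Hb.
  - rewrite (Hb eq_refl); constructor.
  - destruct b.
    + apply (e_ra _ _ _ _ _ _ _ i false j v A); [apply IH; auto | exact Hj].
    + apply (e_sh _ _ _ _ _ _ _ i false j v A); [apply IH; auto | exact Hj].
  - apply e_re; [apply IH1; exact Hb |].
    apply IH2; pose proof (hderiv_lt _ _ _ _ Hki); lia.
  - apply e_rel; [apply IH1; exact Hb | apply IH2; auto].
Qed.

Lemma ederiv_hderiv i b j v A : eag i b j v A -> hyb i j v A.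
Proof.
  induction 1.
  - constructor.
  - eapply h_sh; eassumption.
  - eapply h_sh; eassumption.
  - apply h_rel; assumption.
  - apply h_rer; assumption.
Qed.

Lemma hderiv_goal_iff_ederiv_goal v A :
  hyb 0 (S n) v A <-> eag 0 false (S n) v A.
Proof.
  split.
  - intro H; apply hderiv_ederiv; auto.
  - apply ederiv_hderiv.
Qed.

End HybridAsEager.

Theorem lemma2 (d n : nat) (x : nat -> vec d) (Hn : (1 <= n)%nat)
  (gsh grer grel : vec d -> vec d -> R) :
  exists fsh frel fra fre : vec d -> vec d -> R,
    fsh = fra /\
    forall T : nat -> nat -> Prop, dep_tree n T ->
      forall s : option R,
        hybrid_score d n x gsh grer grel T s <->
        eager_score d n x fsh frel fra fre T s.
Proof.
  exists gsh, grel, gsh, grer; split; [reflexivity |].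
  intros T _ s; apply score_is_ext, hderiv_goal_iff_ederiv_goal.
Qed.
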